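(* (a) Let $p$ be a prime and let $W\subset \mathbb{Z}_p$ be a nonempty set of residues with \[ |W| < \frac{p-1}{2} - \frac{\log p}{\log (4/3)}. \] Then there exist sets $U,V\subset\mathbb{Z}_p$ forming a prime-compatible pair modulo $p$ with $W\subset U$ and $W\subset V$. (b) Let $p\ge 7$ be a prime. Then there exist sets $U,V\subset\mathbb{Z}_p$ forming a prime-compatible pair modulo $p$ such that the residues of $1$ and $11$ lie in $U\setminus V$, the residue of $6$ lies in $V\setminus U$, and $|U\cap V|=2$.
   Context: $\mathbb{Z}_p$ denotes the integers modulo $p$ and $\mathbb{Z}_p^*$ its nonzero residues. For a prime $p$ and nonempty sets $U,V\subset\mathbb{Z}_p$, the pair $U,V$ is called a prime-compatible pair (modulo $p$) if $(U\setminus V)-(V\setminus U)=\{u-v: u\in U\setminus V,\ v\in V\setminus U\}$ equals $\mathbb{Z}_p^*$. *)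

From mathcomp Require Import all_boot all_order all_algebra.
From Stdlib Require Import Reals.
Set Implicit Arguments. Unset Strict Implicit. Unset Printing Implicit Defensive.
Import GRing.Theory.
Local Open Scope ring_scope.

Definition diffset (p : nat) (U V : {set 'F_p}) : {set 'F_p} :=
  [set u - v | u in U :\: V, v in V :\: U].

Definition prime_compatible (p : nat) (U V : {set 'F_p}) : Prop :=
  U != set0 /\ V != set0 /\ diffset U V = [set x : 'F_p | x != 0].

From Stdlib Require Import Reals Lra.
From mathcomp Require Import all_boot all_algebra zify.
Import GRing.Theory.
Local Open Scope ring_scope.

(* Colour the residues outside W by f with two colours and take
   U = W + f^-1(true), V = W + f^-1(false).  Then U \ V and V \ U are the two colour classes minus
   W, so (U, V) is prime-compatible as soon as every d <> 0 is a difference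
   x - (x - d) with x coloured true, x - d coloured false, both outside W.
   For fixed d at least p - 2|W| points x have x, x - d outside W; removing
   pairs {x, x - d} greedily from the end of the progressions of step d yields
   t ~ (p - 2|W|)/2 pairwise disjoint such pairs.  Each pair fails independently with
   probability 3/4, so d fails for at most a (3/4)^t fraction of colourings,
   and the bound on |W| is exactly (p - 1) (3/4)^t < 1: a union bound over d
   leaves a good colouring.  Part (b) is the same count with W = {2, 3} and the
   colours of 1, 6, 11 prescribed, which works for p >= 37. *)

Section Colouring.
Context {p : nat} (W : {set 'F_p}) (f : 'F_p -> bool).

Definition separating := forall d : 'F_p, d != 0 ->
  exists x, [/\ x \notin W, x - d \notin W, f x & ~~ f (x - d)].

Lemma colour_setDl :
  (W :|: [set x | f x]) :\: (W :|: [set x | ~~ f x]) = [set x | f x] :\: W.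
Proof. by apply/setP => x; rewrite !inE; case: (x \in W); case: (f x). Qed.

Lemma colour_setDr :
  (W :|: [set x | ~~ f x]) :\: (W :|: [set x | f x]) = [set x | ~~ f x] :\: W.
Proof. by apply/setP => x; rewrite !inE; case: (x \in W); case: (f x). Qed.

Lemma colour_setI : (W :|: [set x | f x]) :&: (W :|: [set x | ~~ f x]) = W.
Proof. by apply/setP => x; rewrite !inE; case: (x \in W); case: (f x). Qed.

Lemma prime_compatible_colouring : W != set0 -> separating ->
  prime_compatible (W :|: [set x | f x]) (W :|: [set x | ~~ f x]).
Proof.
move=> /set0Pn[w wW] sepWf; split; [|split].
- by apply/set0Pn; exists w; rewrite inE wW.
- by apply/set0Pn; exists w; rewrite inE wW.
- apply/setP => d; rewrite /diffset colour_setDl colour_setDr inE.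
  apply/imset2P/idP => [[x y] | d0].
    rewrite !inE => /andP[_ fx] /andP[_ fy] ->.
    by rewrite subr_eq0; apply: contraNneq fy => <-.
  have [x [xW xdW fx fxd]] := sepWf d d0.
  by exists x (x - d); rewrite ?inE ?xW ?xdW ?fx ?fxd // opprB addrC subrK.
Qed.

End Colouring.

Section Counting.
Context {T : finType}.
Implicit Types (Q : {set {ffun T -> bool}}) (D : {set T}).

Lemma leq_card_setI_preim (A : {set T}) (g : T -> T) : injective g ->
  (2 * #|A| <= #|A :&: g @^-1: A| + #|T|)%N.
Proof.
move=> g_inj; have := cardsUI A (g @^-1: A); rewrite card_preimset //.
have := max_card (A :|: g @^-1: A); lia.
Qed.

Lemma leq_card_bigcup (I : finType) (P : pred I) (B : I -> {set T}) :
  (#|\bigcup_(i | P i) B i| <= \sum_(i | P i) #|B i|)%N.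
Proof.
elim/big_rec2: _ => [|i U n _ IH]; first by rewrite cards0.
by rewrite (leq_trans (leq_card_setU _ _)) // leq_add2l.
Qed.

Lemma leq_card_setD2 (A : {set T}) x y : (#|A| <= #|A :\ x :\ y| + 2)%N.
Proof.
rewrite (cardsD1 x A) (cardsD1 y (A :\ x)).
by case: (_ \in _); case: (_ \in _) => /=; lia.
Qed.

Definition determined_by Q D :=
  forall f g : {ffun T -> bool}, {in D, f =1 g} -> (f \in Q) = (g \in Q).

Lemma determined_byI {Q1 Q2 D1 D2} :
  determined_by Q1 D1 -> determined_by Q2 D2 -> determined_by (Q1 :&: Q2) (D1 :|: D2).
Proof.
move=> dQ1 dQ2 f g fg; rewrite !inE (dQ1 f g) ?(dQ2 f g) // => z zD;
  by apply: fg; rewrite inE zD ?orbT.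
Qed.

Definition colour_eq z b := [set f : {ffun T -> bool} | f z == b].

Lemma card_colour_half {Q D} z b : determined_by Q D -> z \notin D ->
  (#|Q :&: colour_eq z b| * 2 = #|Q|)%N.
Proof.
move=> dQ zD.
pose flip (f : {ffun T -> bool}) : {ffun T -> bool} := [ffun w => (w == z) (+) f w].
have flipK : involutive flip.
  by move=> f; apply/ffunP => w; rewrite !ffunE addbA addbb.
have flipQ f : (flip f \in Q) = (f \in Q).
  apply: dQ => w wD; rewrite ffunE.
  by have -> : (w == z) = false by apply: contraNF zD => /eqP <-.
have flipD : flip @^-1: (Q :&: colour_eq z b) = Q :\: colour_eq z b.
  apply/setP => f; rewrite !inE flipQ ffunE eqxx.
  by case: (f z); case: b; case: (f \in Q).
rewrite -(cardsID (colour_eq z b) Q) -flipD card_preimset ?muln2 ?addnn //.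
exact: can_inj flipK.
Qed.

Lemma card_avoid_pattern {Q D x y} : x != y -> x \notin D -> y \notin D ->
  determined_by Q D ->
  (#|Q :\: (colour_eq x true :&: colour_eq y false)| * 4 = #|Q| * 3)%N.
Proof.
move=> xy xD yD dQ.
have dQy : determined_by (Q :&: colour_eq y false) (D :|: [set y]).
  by apply: determined_byI dQ _ => f g fg; rewrite !inE fg ?inE.
have xDy : x \notin D :|: [set y] by rewrite !inE negb_or xD.
rewrite cardsD setIA setIAC -(card_colour_half y false dQ yD).
rewrite -(card_colour_half x true dQy xDy).
move: #|_ :&: colour_eq x true| => n; lia.
Qed.

End Counting.

Section Translates.
Context {p : nat} (p_pr : prime p).
Local Notation colouring := {ffun 'F_p -> bool}.

Lemma ltn_valFp (x : 'F_p) : (val x < p)%N.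
Proof. by rewrite -[X in (_ < X)%N](Fp_cast p_pr) ltn_ord. Qed.

Lemma natr_valFp (x : 'F_p) : (val x)%:R = x.
Proof. by apply: val_inj; rewrite /= val_Fp_nat // modn_small // ltn_valFp. Qed.

Lemma exists_translate_exit {S : {set 'F_p}} {d : 'F_p} :
  d != 0 -> S != set0 -> S != setT -> exists2 x, x \in S & x + d \notin S.
Proof.
move=> d0 /set0Pn[y yS] ST.
have [x /andP[xS xdS] | noexit] := pickP [pred x | (x \in S) && (x + d \notin S)].
  by exists x.
have yk k : y + d *+ k \in S.
  elim: k => [|k IH]; first by rewrite addr0.
  by move: (noexit (y + d *+ k)); rewrite /= IH mulrSr addrA => /negbFE.
case/negP: ST; apply/eqP/setP => z; rewrite inE.
have <- : y + d *+ val ((z - y) / d) = z.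
  by rewrite -mulr_natr natr_valFp mulrC divfK // addrC subrK.
exact: yk.
Qed.

Definition unseparated (d : 'F_p) (S : {set 'F_p}) : {set colouring} :=
  [set f : colouring | [forall x in S, ~~ (f x && ~~ f (x - d))]].

Lemma determined_by_unseparated (d : 'F_p) (S : {set 'F_p}) :
  determined_by (unseparated d S) (S :|: [set z | z + d \in S]).
Proof.
move=> f g fg; rewrite !inE; apply: eq_forallb_in => x xS.
by rewrite !fg // !inE ?xS // subrK xS orbT.
Qed.

Lemma card_unseparated (Q : {set colouring}) (D S : {set 'F_p}) (d : 'F_p) n :
  d != 0 -> determined_by Q D -> [disjoint S :|: [set z | z + d \in S] & D] ->
  S != setT -> (2 * n <= #|S| + 1)%N ->
  (#|Q :&: unseparated d S| * 4 ^ n <= #|Q| * 3 ^ n)%N.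
Proof.
move=> d0 dQ.
elim: n S => [|n IH] S dS ST Sn.
  by rewrite !expn0 !muln1 (subset_leq_card (subsetIl _ _)).
have S0 : S != set0 by rewrite -card_gt0; lia.
(* Since x + d is not in S, the constraints of S' never involve x or x - d. *)
have [x xS xdS] := exists_translate_exit d0 S0 ST.
set S' := S :\ x :\ (x - d).
have S'S : S' \subset S by apply/subsetP => z; rewrite !inE => /and3P[].
have xS' : x \notin S' by rewrite !inE eqxx andbF.
have S'T : S' != setT by apply: contraNneq xS' => ->; rewrite inE.
have S'n : (2 * n <= #|S'| + 1)%N.
  rewrite -(leq_add2r 2) addnAC -mulnSr (leq_trans Sn) // leq_add2r.
  exact: leq_card_setD2.
have suppS' : S' :|: [set z | z + d \in S'] \subset S :|: [set z | z + d \in S].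
  by apply: setUSS S'S _; apply/subsetP => z; rewrite !inE => /and3P[_ _ ->].
pose D' := D :|: (S' :|: [set z | z + d \in S']).
have dQ' : determined_by (Q :&: unseparated d S') D'.
  exact: determined_byI dQ (determined_by_unseparated d S').
have xD : x \notin D by rewrite (disjointFr dS) // inE xS.
have xdD : x - d \notin D by rewrite (disjointFr dS) // !inE subrK xS orbT.
have xD' : x \notin D' by rewrite !inE eqxx (negbTE xD) (negbTE xdS) /= !andbF.
have xdD' : x - d \notin D' by rewrite !inE subrK !eqxx (negbTE xdD) /= !andbF.
have xxd : x != x - d by rewrite -subr_eq0 opprB addrC subrK.
have sub : Q :&: unseparated d S \subset
    (Q :&: unseparated d S') :\: (colour_eq x true :&: colour_eq (x - d) false).
  apply/subsetP => f; rewrite !inE => /andP[fQ /forall_inP fS].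
  rewrite fQ eqb_id eqbF_neg (fS x xS) /=.
  by apply/forall_inP => z /(subsetP S'S); exact: fS.
apply: leq_trans (leq_mul (subset_leq_card sub) (leqnn _)) _.
rewrite expnS mulnA (card_avoid_pattern xxd xD' xdD' dQ') expnS mulnCA mulnAC.
by rewrite [X in (_ <= X)%N]mulnC leq_mul2r IH ?orbT // (disjointWl suppS').
Qed.

Lemma exists_separating_colouring {W F : {set 'F_p}} {R : {set colouring}} {t} :
  W != set0 -> determined_by R F -> R != set0 ->
  (p.-1 * 3 ^ t < 4 ^ t)%N -> (2 * t + 2 * #|W :|: F| <= p.+1)%N ->
  exists2 f : colouring, f \in R & separating W f.
Proof.
move=> /set0Pn[w wW] dR R0 t_big t_small.
pose C := ~: (W :|: F).
pose S (d : 'F_p) := [set x in C | x - d \in C].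
pose B d := R :&: unseparated d (S d).
have [R_bad | /subsetPn[f fR fB]] := boolP (R \subset \bigcup_(d | d != 0) B d).
  have cardC : #|C| = (p - #|W :|: F|)%N by rewrite cardsCs setCK card_Fp.
  have card_S d : (2 * t <= #|S d| + 1)%N.
    have -> : S d = C :&: (fun x => x - d) @^-1: C by apply/setP => x; rewrite !inE.
    have := leq_card_setI_preim C (fun x => x - d) (addIr (- d)).
    by rewrite card_Fp // cardC; set X := #|_ :&: _|; lia.
  have B_small d : d != 0 -> (#|B d| * 4 ^ t <= #|R| * 3 ^ t)%N.
    move=> d0; apply: card_unseparated d0 dR _ _ (card_S d).
      rewrite -setI_eq0; apply/eqP/setP => z; rewrite !inE addrK.
      by case: (z \in F); rewrite ?orbT ?andbF.
    by apply/eqP => /setP/(_ w); rewrite !inE wW.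
  have : (#|R| * 4 ^ t <= #|R| * (p.-1 * 3 ^ t))%N.
    have R_sum := leq_trans (subset_leq_card R_bad) (leq_card_bigcup _ _ _).
    apply: leq_trans (leq_mul R_sum (leqnn _)) _.
    rewrite big_distrl /= (leq_trans (leq_sum _ B_small)) //.
    by rewrite sum_nat_const cardC1 card_Fp // mulnCA.
  by rewrite leq_mul2l leqNgt t_big orbF cards_eq0 (negbTE R0).
exists f => // d d0.
have : f \notin unseparated d (S d).
  by apply: contra fB => fM; apply/bigcupP; exists d => //; rewrite inE fR.
rewrite inE => /forall_inPn[x]; rewrite negbK !inE !negb_or.
by move=> /andP[/andP[xW _] /andP[xdW _]] /andP[fx fxd]; exists x.
Qed.

End Translates.

Section RealBound.
Local Open Scope R_scope.

Lemma INR_expn a t : INR (a ^ t)%N = INR a ^ t.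
Proof.
elim: t => [|t IH]; first by rewrite expn0.
by rewrite expnS -multE mult_INR IH.
Qed.

Lemma mul_pow3_lt_pow4 (x : R) t : 0 < x -> ln x / ln (4 / 3) < INR t ->
  x * 3 ^ t < 4 ^ t.
Proof.
move=> x0 xt.
have l43 : 0 < ln (4 / 3) by rewrite -ln_1; apply: ln_increasing; lra.
have : ln x < ln ((4 / 3) ^ t).
  rewrite ln_pow; last lra.
  have -> : ln x = ln x / ln (4 / 3) * ln (4 / 3) by field; apply: Rgt_not_eq.
  exact: Rmult_lt_compat_r.
have pos43 : 0 < (4 / 3) ^ t by apply: pow_lt; lra.
move/ln_lt_inv => /(_ x0 pos43) x43.
rewrite (_ : 4 = 4 / 3 * 3); last by field.
rewrite Rpow_mult_distr.
by apply: Rmult_lt_compat_r x43; apply: pow_lt; lra.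
Qed.

Lemma expn_bound_of_real {p m} : (2 <= p)%N ->
  INR m < (INR p - 1) / 2 - ln (INR p) / ln (4 / 3) ->
  (p.-1 * 3 ^ ((p - 2 * m) %/ 2) < 4 ^ ((p - 2 * m) %/ 2))%N.
Proof.
move=> p2 H; set t := ((p - 2 * m) %/ 2)%N.
have p2R : 2 <= INR p by apply: (le_INR 2); exact/leP.
have p_le : INR p <= 2 * INR t + 1 + 2 * INR m.
  have /leP/le_INR : (p <= 2 * t + 1 + 2 * m)%N by rewrite /t; lia.
  by rewrite -!plusE -!multE !plus_INR /=; lra.
have key : INR p * 3 ^ t < 4 ^ t by apply: mul_pow3_lt_pow4; lra.
have /ltP key_nat : (p * 3 ^ t < 4 ^ t)%coq_nat.
  apply: INR_lt; rewrite -multE mult_INR !INR_expn.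
  have -> : INR 3 = 3 by rewrite /INR; lra.
  by have -> : INR 4 = 4 by rewrite /INR; lra.
by apply: leq_ltn_trans key_nat; rewrite leq_mul2r leq_pred orbT.
Qed.

End RealBound.

Lemma exists_prime_compatible_extension p (W : {set 'F_p}) : prime p -> W != set0 ->
  Rlt (INR #|W|) ((INR p - 1) / 2 - ln (INR p) / ln (4 / 3)) ->
  exists U V : {set 'F_p}, prime_compatible U V /\ W \subset U /\ W \subset V.
Proof.
move=> p_pr W0 /(expn_bound_of_real (prime_gt1 p_pr)) t_big.
have dT : determined_by [set: {ffun 'F_p -> bool}] set0 by move=> f g _; rewrite !inE.
have T0 : [set: {ffun 'F_p -> bool}] != set0 by apply/set0Pn; exists [ffun=> true].
have t_pos : (0 < (p - 2 * #|W|) %/ 2)%N.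
  rewrite lt0n; apply: contraTneq t_big => ->; rewrite !expn0 muln1 -leqNgt.
  by have := prime_gt1 p_pr; lia.
have t_small : (2 * ((p - 2 * #|W|) %/ 2) + 2 * #|W :|: set0| <= p.+1)%N.
  by rewrite setU0; lia.
have [f _ sepWf] := exists_separating_colouring p_pr W0 dT T0 t_big t_small.
exists (W :|: [set x | f x]), (W :|: [set x | ~~ f x]).
by split; [exact: prime_compatible_colouring | split; exact: subsetUl].
Qed.

Definition marked_pair {p} (U V : {set 'F_p}) : Prop :=
  [/\ prime_compatible U V, (1%:R : 'F_p) \in U :\: V, (11%:R : 'F_p) \in U :\: V,
      (6%:R : 'F_p) \in V :\: U & #|U :&: V| = 2%N].

Lemma marked_pair_colouring p (W : {set 'F_p}) (f : 'F_p -> bool) :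
  separating W f -> #|W| = 2%N ->
  1%:R \notin W -> 11%:R \notin W -> 6%:R \notin W ->
  f 1%:R -> f 11%:R -> ~~ f 6%:R ->
  marked_pair (W :|: [set x | f x]) (W :|: [set x | ~~ f x]).
Proof.
move=> sepWf W2 W1 W11 W6 f1 f11 f6.
have W0 : W != set0 by rewrite -card_gt0 W2.
split; rewrite ?colour_setDl ?colour_setDr ?colour_setI ?inE ?W1 ?W11 ?W6 //.
exact: prime_compatible_colouring.
Qed.

Lemma Fp_natr_eq p a b : prime p -> (a < p)%N -> (b < p)%N ->
  ((a%:R : 'F_p) == b%:R) = (a == b).
Proof. by move=> p_pr ap bp; rewrite -val_eqE /= !val_Fp_nat // !modn_small. Qed.

Lemma mul_expn3_lt_expn4 t : (14 <= t -> (2 * t + 9) * 3 ^ t < 4 ^ t)%N.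
Proof.
elim: t => // t IH; rewrite leq_eqVlt => /orP[/eqP <- | t14]; first lia.
by have := IH t14; rewrite !expnS; nia.
Qed.

Lemma exists_marked_pair_large p : prime p -> (37 <= p)%N ->
  exists U V : {set 'F_p}, marked_pair U V.
Proof.
move=> p_pr p37.
have eqFp a b : (a < 12)%N -> (b < 12)%N -> ((a%:R : 'F_p) == b%:R) = (a == b).
  by move=> a12 b12; apply: Fp_natr_eq; lia.
pose W : {set 'F_p} := [set 2%:R; 3%:R].
pose F : {set 'F_p} := [set 1%:R; 6%:R; 11%:R].
pose R := [set f : {ffun 'F_p -> bool} | [&& f 1%:R, f 11%:R & ~~ f 6%:R]].
have dR : determined_by R F by move=> f g fg; rewrite !inE !fg // !inE eqxx ?orbT.
have R0 : R != set0.
  apply/set0Pn; exists [ffun z => (z == 1%:R) || (z == 11%:R)].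
  by rewrite !inE !ffunE !eqFp.
have W0 : W != set0 by apply/set0Pn; exists 2%:R; rewrite !inE eqxx.
set t := ((p - 9) %/ 2)%N.
have t_big : (p.-1 * 3 ^ t < 4 ^ t)%N.
  have t14 : (14 <= t)%N by rewrite /t; lia.
  apply: leq_ltn_trans _ (mul_expn3_lt_expn4 t t14).
  by rewrite leq_mul2r /t; apply/orP; right; lia.
have t_small : (2 * t + 2 * #|W :|: F| <= p.+1)%N.
  suff : (#|W :|: F| <= 5)%N by lia.
  apply: leq_trans (leq_card_setU W F) _.
  apply: leq_trans (leq_add (leqnn _) (leq_card_setU _ [set 11%:R])) _.
  by rewrite !cards2 cards1; case: (_ != _); case: (_ != _).
have [f] := exists_separating_colouring p_pr W0 dR R0 t_big t_small.
rewrite inE => /and3P[f1 f11 f6] sepWf.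
exists (W :|: [set x | f x]), (W :|: [set x | ~~ f x]).
by apply: marked_pair_colouring; rewrite ?cards2 ?inE ?eqFp.
Qed.

Definition nat_separating (p : nat) (W col : seq nat) : bool :=
  all (fun d => has (fun j => [&& j \notin W, j \notin col,
                                 (j + d) %% p \notin W & (j + d) %% p \in col]%N)
                    (iota 0 p))
      (iota 1 p.-1).

Lemma separating_of_nat p (W col : seq nat) : prime p -> nat_separating p W col ->
  separating [set x : 'F_p | (x : nat) \in W] (fun x => (x : nat) \in col).
Proof.
move=> p_pr /allP sep d d0.
have dI : (d : nat) \in iota 1 p.-1.
  rewrite mem_iota add1n prednK ?(prime_gt0 p_pr) // (ltn_valFp p_pr) andbT lt0n.
  by apply: contra d0 => /eqP d0; apply/eqP/val_inj.
have /hasP[j] := sep _ dI.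
rewrite mem_iota => /andP[_ jp] /and4P[jW jcol jdW jdcol].
have jd : (j + (d : nat))%:R - d = j%:R :> 'F_p.
  by rewrite natrD (natr_valFp p_pr) addrK.
exists (j + (d : nat))%:R; rewrite jd !inE !val_Fp_nat // (modn_small jp).
by rewrite jW jcol jdW jdcol.
Qed.

Definition marked_witness p (w1 w2 : nat) (col : seq nat) : bool :=
  [&& [&& w1 < p, w2 < p & w1 != w2], nat_separating p [:: w1; w2] col,
      all (fun n => n %% p \notin [:: w1; w2]) [:: 1; 11; 6] &
      [&& 1 %% p \in col, 11 %% p \in col & 6 %% p \notin col]]%N.

Lemma marked_pair_of_witness p w1 w2 col : prime p -> marked_witness p w1 w2 col ->
  exists U V : {set 'F_p}, marked_pair U V.
Proof.
move=> p_pr /and4P[/and3P[w1p w2p w12] sep /and4P[W1 W11 W6 _] /and3P[f1 f11 f6]].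
set W := [set x : 'F_p | (x : nat) \in [:: w1; w2]].
have W2 : #|W| = 2%N.
  have -> : W = [set w1%:R; w2%:R].
    by apply/setP => x; rewrite !inE -!val_eqE /= !val_Fp_nat // !modn_small.
  by rewrite cards2 Fp_natr_eq ?w12.
exists (W :|: [set x : 'F_p | (x : nat) \in col]).
exists (W :|: [set x : 'F_p | ~~ ((x : nat) \in col)]).
apply: marked_pair_colouring => //; first exact: separating_of_nat.
all: by rewrite ?in_set val_Fp_nat.
Qed.

(* Below 37 the count of exists_marked_pair_large fails.  An entry
   (w1, w2, col), found by exhaustive search, stands for W = {w1, w2} and the
   colouring x |-> x \in col. *)
Definition small_witness (p : nat) : nat * nat * seq nat :=
  match p with
  | 7 => (2, 3, [:: 1; 4])
  | 11 => (7, 2, [:: 0; 1; 3; 4; 9; 10])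
  | 13 => (8, 12, [:: 1; 4; 9; 10; 11])
  | 17 => (0, 16, [:: 1; 3; 11; 14])
  | 19 => (17, 5, [:: 1; 2; 7; 10; 11])
  | 23 => (8, 12, [:: 0; 1; 3; 5; 9; 11; 13; 15; 19; 21; 22])
  | 29 => (15, 14, [:: 0; 1; 2; 3; 8; 9; 11; 18; 22; 23; 26])
  | 31 => (26, 19, [:: 1; 4; 5; 9; 11; 12; 13; 14; 18; 20; 21; 22; 29])
  | _ => (0, 0, [::])
  end%N.

Lemma exists_marked_pair_small p : prime p -> (7 <= p < 37)%N ->
  exists U V : {set 'F_p}, marked_pair U V.
Proof.
move=> p_pr /andP[p7 p37].
have : all (fun q => prime q ==> (7 <= q)%N ==>
              let: (w1, w2, col) := small_witness q in marked_witness q w1 w2 col)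
           (iota 0 37) by vm_compute.
move=> /allP/(_ p); rewrite mem_iota p37 p_pr p7 => /(_ isT).
by case: (small_witness p) => [[w1 w2] col]; exact: marked_pair_of_witness.
Qed.

Theorem mainTheorem4 :
  (forall (p : nat) (W : {set 'F_p}), prime p -> W != set0 ->
     Rlt (INR #|W|) (Rminus (Rdiv (Rminus (INR p) (IZR 1)) (IZR 2)) (Rdiv (ln (INR p)) (ln (Rdiv (IZR 4) (IZR 3))))) ->
     exists U V : {set 'F_p},
       prime_compatible U V /\ W \subset U /\ W \subset V) /\
  (forall p : nat, prime p -> leq 7 p ->
     exists U V : {set 'F_p},
       [/\ prime_compatible U V,
           (1%:R : 'F_p) \in U :\: V, (11%:R : 'F_p) \in U :\: V,
           (6%:R : 'F_p) \in V :\: U & #|U :&: V| = 2%nat]).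
Proof.
split; first exact: exists_prime_compatible_extension.
move=> p p_pr p7; have [p37 | p37] := ltnP p 37.
  by apply: exists_marked_pair_small => //; rewrite p37 andbT.
exact: exists_marked_pair_large.
Qed.
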